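(* Let $\mathcal{H}$ be a hypertree, $T$ a host tree of $\mathcal{H}$, and $B$ a basic set of $\mathcal{H}$. Let $\Gamma_{B,T}$ be the graph with vertex set $A(B)$ in which two distinct components $A_1,A_2\in A(B)$ are adjacent if and only if $T$ has an edge $e$ with $I_\mathcal{H}(e)=B$ having one endpoint in $A_1$ and the other in $A_2$. Then $\Gamma_{B,T}$ is a tree.
   Context: A hypergraph $\mathcal{H}$ has a finite vertex set $V(\mathcal{H})$ and a finite family of nonempty subsets (edges). A host tree is a tree on $V(\mathcal{H})$ in which every edge induces a connected subgraph; a hypertree is a hypergraph with a host tree. For $V'\subseteq V(\mathcal{H})$, $I_\mathcal{H}(V')$ is the intersection of all edges containing $V'$, or $V(\mathcal{H})$ if none does; for a tree edge $e=xy$, $I_\mathcal{H}(e)=I_\mathcal{H}(\{x,y\})$. For $A\subseteq V(\mathcal{H})$, $\overline{\mathcal{H}_A}$ is the hypergraph on $V(\mathcal{H})$ whose edges are the edges of $\mathcal{H}$ not containing $A$. The 2-section of a hypergraph is the graph on its vertices where two distinct vertices are adjacent iff some edge contains both. $A(B)$ is the set of connected components of the 2-section of $\overline{\mathcal{H}_B}$ containing at least one vertex of $B$. A union of sets is connected if the intersection graph of the sets is connected. $Comp(\mathcal{H})$ is the hypergraph without repeated edges on $V(\mathcal{H})$ whose edges are $V(\mathcal{H})$, all singletons, and all proper subsets obtainable from edges of $\mathcal{H}$ by repeated nonempty intersections and connected unions; a basic set is an edge of $Comp(\mathcal{H})$ with more than one vertex that is not a connected union of strictly smaller edges of $Comp(\mathcal{H})$.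 *)

From mathcomp Require Import all_boot.
Set Implicit Arguments. Unset Strict Implicit. Unset Printing Implicit Defensive.

Section Hyper.
Variable V : finType.

(* A hypergraph on vertex set V (the whole finite type) is a finite family
   (a list, repetitions allowed) of edges. *)

Definition edges_nonempty (H : seq {set V}) : Prop :=
  forall E, E \in H -> E != set0.

Definition simple_graph (g : rel V) : Prop :=
  (forall x, ~~ g x x) /\ (forall x y, g x y = g y x).

Definition restrict_rel (U : finType) (S : {set U}) (g : rel U) : rel U :=
  [rel x y | [&& g x y, x \in S & y \in S]].

Definition connected_on (U : finType) (S : {set U}) (g : rel U) : Prop :=
  forall x y, x \in S -> y \in S -> connect (restrict_rel S g) x y.

Definition acyclic_on (U : finType) (S : {set U}) (g : rel U) : Prop :=
  forall c : seq U, all (mem S) c -> uniq c -> 3 <= size c -> ~~ cycle g c.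

Definition is_tree_on (U : finType) (S : {set U}) (g : rel U) : Prop :=
  [/\ S != set0, connected_on S g & acyclic_on S g].

Definition host_tree (H : seq {set V}) (t : rel V) : Prop :=
  [/\ simple_graph t, is_tree_on [set: V] t &
      forall E, E \in H -> connected_on E t].

Definition hypertree (H : seq {set V}) : Prop := exists t, host_tree H t.

(* I_H(V'): intersection of all edges containing V' (V(H) if none). *)
Definition I_H (H : seq {set V}) (W : {set V}) : {set V} :=
  \bigcap_(E <- H | W \subset E) E.

Definition I_edge (H : seq {set V}) (x y : V) : {set V} := I_H H [set x; y].

Definition H_bar (H : seq {set V}) (A : {set V}) : seq {set V} :=
  filter (fun E : {set V} => ~~ (A \subset E)) H.

Definition two_section (H : seq {set V}) : rel V :=
  [rel x y : V | (x != y) && has (fun E : {set V} => (x \in E) && (y \in E)) H].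

Definition component (g : rel V) (x : V) : {set V} := [set y | connect g x y].

Definition A_of (H : seq {set V}) (B : {set V}) : {set {set V}} :=
  [set component (two_section (H_bar H B)) x | x in B].

Definition inter_rel : rel {set V} := [rel X Y | (X != Y) && (X :&: Y != set0)].

Definition family_connected (F : {set {set V}}) : Prop :=
  connected_on F inter_rel.

Inductive obtainable (H : seq {set V}) : {set V} -> Prop :=
| ob_edge E : E \in H -> obtainable H E
| ob_inter (F : {set {set V}}) :
    F != set0 -> (forall X, X \in F -> obtainable H X) ->
    \bigcap_(X in F) X != set0 -> obtainable H (\bigcap_(X in F) X)
| ob_union (F : {set {set V}}) :
    F != set0 -> (forall X, X \in F -> obtainable H X) ->
    family_connected F -> obtainable H (\bigcup_(X in F) X).

Definition comp_edge (H : seq {set V}) (X : {set V}) : Prop :=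
  X = [set: V] \/ #|X| = 1 \/ (obtainable H X /\ X \proper [set: V]).

Definition basic_set (H : seq {set V}) (B : {set V}) : Prop :=
  [/\ comp_edge H B, 1 < #|B| &
      ~ exists F : {set {set V}},
          [/\ forall X, X \in F -> comp_edge H X /\ X \proper B,
              family_connected F & \bigcup_(X in F) X = B]].

Definition Gamma_rel (H : seq {set V}) (t : rel V) (B : {set V}) : rel {set V} :=
  [rel A1 A2 : {set V} | (A1 != A2) &&
     [exists x, exists y, [&& t x y, I_edge H x y == B, x \in A1 & y \in A2]]].

End Hyper.

From mathcomp Require Import all_boot.
Set Implicit Arguments. Unset Strict Implicit. Unset Printing Implicit Defensive.

(* Deleting an edge uv of the host tree T leaves u and v in different
   components.  Every edge of H induces a subtree, so it lies on one side of
   each tree edge it does not contain and contains I(uv) for each tree edge uv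
   it does contain; both properties pass to intersections and connected
   unions, hence hold for B.  So B induces a subtree of T and I(e) is contained
   in B for its edges, while a tree edge e joining two different members of
   A(B) has I(e) containing B, since an edge of H containing e but not B would
   merge them.  Following T inside B therefore connects Gamma.  Every member of
   A(B) lies on one side of such an edge xy, so a cycle of Gamma through the
   Gamma-edge realised by xy would join y back to x avoiding xy.  Only the fact
   that B is a nonempty edge of Comp(H) is used, not the indecomposability of
   basic sets. *)

Lemma connect_ind (T : finType) (e : rel T) (P : T -> Prop) x y :
  (forall a b, e a b -> P a -> P b) -> P x -> connect e x y -> P y.
Proof.
move=> step Px /connectP [p pth ->]; elim: p x Px pth => [|z p IH] x Px //=.
by case/andP=> exz; apply: IH (step _ _ exz Px).
Qed.

Lemma component_eq (T : finType) (g : rel T) x y :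
  connect_sym g -> y \in component g x -> component g y = component g x.
Proof.
by move=> gsym; rewrite inE => xy; apply/setP => w; rewrite !inE (same_connect gsym xy).
Qed.

Lemma mem_component (T : finType) (g : rel T) x : x \in component g x.
Proof. by rewrite inE connect0. Qed.

Lemma two_section_connect_sym (T : finType) (K : seq {set T}) : connect_sym (two_section K).
Proof.
apply: sym_connect_sym => x y; rewrite /two_section /= eq_sym; congr (_ && _).
by apply: eq_has => E; rewrite /= andbC.
Qed.

Section Components.
Variables (V : finType) (H : seq {set V}) (B : {set V}).
Local Notation comp := (component (two_section (H_bar H B))).

Lemma mem_A_of C x : C \in A_of H B -> x \in C -> comp x = C.
Proof. by case/imsetP => z _ ->; apply: component_eq (two_section_connect_sym _). Qed.

Lemma component_in_A_of x : x \in B -> comp x \in A_of H B.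
Proof. exact: imset_f. Qed.

Lemma H_bar_sub_component E x z : E \in H_bar H B -> x \in E -> x \in comp z -> E \subset comp z.
Proof.
rewrite inE => EH xE zx; apply/subsetP => e eE; rewrite inE.
apply: connect_trans zx _; have [<-|xe] := eqVneq x e; first exact: connect0.
by apply: connect1; rewrite /two_section /= xe; apply/hasP; exists E; rewrite ?xE.
Qed.

Lemma sub_I_H_components z z' : comp z != comp z' -> B \subset I_H H [set z; z'].
Proof.
move=> neq; rewrite /I_H big_seq_cond.
apply: (@big_ind {set V} (fun X => B \subset X) setT (@setI V)) => [|X Y BX BY|E /andP[EH zzE]].
- exact: subsetT.
- by rewrite subsetI BX BY.
- apply: contraR neq => nBE.
  have EHbar : E \in H_bar H B by rewrite mem_filter nBE.
  move: zzE; rewrite subUset !sub1set => /andP[zE z'E].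
  have /subsetP EC := H_bar_sub_component EHbar zE (mem_component _ z).
  by rewrite (component_eq (two_section_connect_sym _) (EC z' z'E)).
Qed.

End Components.

Section HostTree.
Variables (V : finType) (t : rel V).
Hypothesis t_irr : forall x, ~~ t x x.
Hypothesis t_sym : forall x y, t x y = t y x.
Hypothesis t_conn : connected_on [set: V] t.
Hypothesis t_acyclic : acyclic_on [set: V] t.

Definition del_edge (u v : V) : rel V :=
  [rel a b | t a b && ([set a; b] != [set u; v])].

Definition one_side u v (X : {set V}) : Prop :=
  forall a b, a \in X -> b \in X -> connect (del_edge u v) a b.

Definition one_side_of_edges (X : {set V}) : Prop :=
  forall u v, t u v -> ~~ ((u \in X) && (v \in X)) -> one_side u v X.

Lemma del_edge_connect_sym u v : connect_sym (del_edge u v).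
Proof. by apply: sym_connect_sym => a b; rewrite /del_edge /= t_sym setUC. Qed.

Lemma set2_neq_notin (S : {set V}) u v p q :
  ~~ ((u \in S) && (v \in S)) -> p \in S -> q \in S -> [set p; q] != [set u; v].
Proof.
move=> /negP nuv pS qS; apply/eqP => Epq; apply: nuv.
have: u \in [set p; q] by rewrite Epq set21.
have: v \in [set p; q] by rewrite Epq set22.
by rewrite !inE => /orP[]/eqP-> /orP[]/eqP->; rewrite ?pS ?qS.
Qed.

Lemma connected_one_side (S : {set V}) u v :
  connected_on S t -> ~~ ((u \in S) && (v \in S)) -> one_side u v S.
Proof.
move=> cS nuv a b aS bS; apply: (connect_sub _ (cS a b aS bS)) => x y /and3P[txy xS yS].
by apply: connect1; rewrite /del_edge /= txy (set2_neq_notin nuv xS yS).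
Qed.

Lemma del_edge_disconnects u v : t u v -> ~~ connect (del_edge u v) u v.
Proof.
move=> tuv; apply/negP => /connectP [p0 pth0 last0].
move: last0; case: (shortenP pth0) => {p0 pth0} p pth uq _ lastp.
have uv : u != v by apply: contraTneq tuv => ->; exact: t_irr.
case: p pth uq lastp => [|w [|w' p]] pth uq lastp.
- by rewrite lastp eqxx in uv.
- by move: pth; rewrite lastp /= /del_edge /= eqxx andbF.
- have all_in := introT allP (fun x (_ : x \in [:: u, w, w' & p]) => in_setT x).
  have /negP[] := t_acyclic all_in uq isT.
  rewrite /cycle rcons_path -lastp t_sym tuv andbT.
  by apply: sub_path pth => a b /andP[].
Qed.

Lemma path_del_edge u v c x s : c \notin x :: s -> c \in [set u; v] ->
  path t x s -> path (del_edge u v) x s.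
Proof.
move=> cn cuv; elim: s x cn => [|y s IH] x //=.
rewrite inE negb_or => /andP[cx cn] /andP[txy pth].
rewrite IH // andbT /del_edge /= txy; apply/eqP => Exy.
have cy : c != y by move: cn; rewrite inE negb_or => /andP[].
by move: cuv; rewrite -Exy !inE (negbTE cx) (negbTE cy).
Qed.

Lemma uniq_path_del_edge_split a p1 w p2 :
  path t a (p1 ++ w :: p2) -> uniq (a :: p1 ++ w :: p2) ->
  ~~ connect (del_edge (last a p1) w) a (last w p2).
Proof.
rewrite cat_path -cat_cons cat_uniq.
move=> /andP[pth1 /andP[tuw pth2]] /and3P[_ /hasPn notin _].
set u := last a p1 in pth1 tuw *.
have wn : w \notin a :: p1 by apply: notin; apply: mem_head.
have un : u \notin w :: p2 by apply: contraL (mem_last a p1); apply: notin.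
have au : connect (del_edge u w) a u.
  by apply/connectP; exists p1 => //; apply: path_del_edge wn (set22 u w) pth1.
have wb : connect (del_edge u w) w (last w p2).
  by apply/connectP; exists p2 => //; apply: path_del_edge un (set21 u w) pth2.
apply: contra (del_edge_disconnects tuw) => ab.
by rewrite (connect_trans _ (connect_trans ab _)) // del_edge_connect_sym.
Qed.

Lemma one_side_of_edges_connected X : one_side_of_edges X -> connected_on X t.
Proof.
move=> sideX a b aX bX.
have /connectP [p0 pth0 last0] : connect t a b.
  move: (t_conn (in_setT a) (in_setT b)); apply: connect_sub => x y /and3P[txy _ _].
  exact: connect1.
move: last0; case: (shortenP pth0) => {p0 pth0} p pth uq _ lastp.
suff allX : all (mem X) p.
  apply/connectP; exists p => //.
  elim: p a aX pth allX {uq lastp} => [|y p IH] a aX //= /andP[tay pth] /andP[yX allX].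
  by rewrite {1}/restrict_rel /= tay aX yX IH.
apply/allP => w wp; apply: contraT => wX.
move: pth uq lastp; case/splitPr: wp => p1 p2 pth uq.
rewrite last_cat /= => lastp.
have tuw : t (last a p1) w by move: pth; rewrite cat_path /= => /and3P[].
have nuw : ~~ ((last a p1 \in X) && (w \in X)) by apply: contra wX => /andP[].
by have := uniq_path_del_edge_split pth uq; rewrite -lastp (sideX _ _ tuw nuw a b aX bX).
Qed.

Lemma bigcup_one_side u v (F : {set {set V}}) :
  family_connected F -> (forall X, X \in F -> one_side u v X) ->
  one_side u v (\bigcup_(X in F) X).
Proof.
move=> connF sideF a b /bigcupP [X XF aX] /bigcupP [Y YF bY].
pose reached (Z : {set V}) := forall z, z \in Z -> connect (del_edge u v) a z.
have step Z Z' : restrict_rel F (@inter_rel V) Z Z' -> reached Z -> reached Z'.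
  move=> /and3P [/andP[_ /set0Pn [p /setIP [pZ pZ']]] _ Z'F] reachZ z zZ'.
  exact: connect_trans (reachZ p pZ) (sideF _ Z'F p z pZ' zZ').
have reachX : reached X by move=> z; apply: sideF X XF a z aX.
exact: (connect_ind step reachX (connF X Y XF YF) b bY).
Qed.

Variable H : seq {set V}.
Hypothesis connH : forall E, E \in H -> connected_on E t.

Definition I_edge_closed (X : {set V}) : Prop :=
  forall u v, t u v -> u \in X -> v \in X -> I_edge H u v \subset X.

Lemma I_edge_sub (E : {set V}) u v : E \in H -> u \in E -> v \in E -> I_edge H u v \subset E.
Proof.
move=> EH uE vE; rewrite /I_edge /I_H (big_rem E) //= subUset !sub1set uE vE.
exact: subsetIl.
Qed.

Lemma bigcap_one_side_of_edges (F : {set {set V}}) :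
  (forall X, X \in F -> one_side_of_edges X) -> one_side_of_edges (\bigcap_(X in F) X).
Proof.
move=> sideF u v tuv nuv a b /bigcapP aF /bigcapP bF.
have [Z ZF nuvZ] : exists2 Z, Z \in F & ~~ ((u \in Z) && (v \in Z)).
  apply/exists_inP; apply: contraR nuv => /exists_inPn uvF.
  by apply/andP; split; apply/bigcapP => Z /uvF /negPn /andP[].
exact: sideF Z ZF u v tuv nuvZ a b (aF Z ZF) (bF Z ZF).
Qed.

Lemma bigcap_I_edge_closed (F : {set {set V}}) :
  (forall X, X \in F -> I_edge_closed X) -> I_edge_closed (\bigcap_(X in F) X).
Proof.
move=> closedF u v tuv /bigcapP uF /bigcapP vF; apply/bigcapsP => Z ZF.
exact: closedF Z ZF u v tuv (uF Z ZF) (vF Z ZF).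
Qed.

Lemma bigcup_one_side_of_edges (F : {set {set V}}) : family_connected F ->
  (forall X, X \in F -> one_side_of_edges X) -> one_side_of_edges (\bigcup_(X in F) X).
Proof.
move=> connF sideF u v tuv nuv; apply: (bigcup_one_side connF) => Z ZF.
apply: (sideF Z ZF u v tuv); apply: contra nuv => /andP[uZ vZ].
by apply/andP; split; apply/bigcupP; exists Z.
Qed.

Lemma bigcup_I_edge_closed (F : {set {set V}}) : family_connected F ->
  (forall X, X \in F -> one_side_of_edges X /\ I_edge_closed X) ->
  I_edge_closed (\bigcup_(X in F) X).
Proof.
move=> connF invF u v tuv uF vF.
case: (boolP [exists Z in F, (u \in Z) && (v \in Z)]).
  case/exists_inP => Z ZF /andP[uZ vZ].
  exact: subset_trans ((invF Z ZF).2 u v tuv uZ vZ) (bigcup_sup _ ZF).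
move/exists_inPn => nuvF.
have sideU : one_side u v (\bigcup_(X in F) X).
  by apply: bigcup_one_side => // Z ZF; apply: (invF Z ZF).1 u v tuv (nuvF Z ZF).
by have := del_edge_disconnects tuv; rewrite sideU.
Qed.

Lemma obtainable_one_side_I_edge_closed X :
  obtainable H X -> one_side_of_edges X /\ I_edge_closed X.
Proof.
elim=> [E EH | F _ _ invF _ | F _ _ invF connF].
- split; last by move=> u v _; apply: I_edge_sub.
  by move=> u v _; apply: connected_one_side (connH EH).
- split; first by apply: bigcap_one_side_of_edges => Z /invF [].
  by apply: bigcap_I_edge_closed => Z /invF [].
- split; last exact: bigcup_I_edge_closed.
  by apply: bigcup_one_side_of_edges => // Z /invF [].
Qed.

Lemma comp_edge_connected_I_edge_closed X :
  comp_edge H X -> connected_on X t /\ I_edge_closed X.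
Proof.
case=> [-> | [/eqP/cards1P [w ->] | [/obtainable_one_side_I_edge_closed [sideX closedX] _]]].
- by split=> // u v *; apply: subsetT.
- split=> [a b | u v]; first by rewrite !inE => /eqP-> /eqP->; apply: connect0.
  by rewrite !inE => tuv /eqP uw /eqP vw; move: tuv; rewrite uw vw (negbTE (t_irr w)).
- by split=> //; apply: one_side_of_edges_connected.
Qed.

Variable B : {set V}.
Local Notation comp := (component (two_section (H_bar H B))).
Local Notation Gamma := (Gamma_rel H t B).

Lemma A_of_one_side C u v : C \in A_of H B -> ~~ ((u \in C) && (v \in C)) -> one_side u v C.
Proof.
case/imsetP => z _ -> nuv.
have reach a : a \in comp z -> connect (del_edge u v) z a.
  rewrite inE => za.
  pose P a := connect (two_section (H_bar H B)) z a /\ connect (del_edge u v) z a.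
  have step a' b : two_section (H_bar H B) a' b -> P a' -> P b.
    move=> gab [za' zda']; split; first exact: connect_trans za' (connect1 gab).
    case/andP: gab => _ /hasP [E EHbar /andP[aE bE]].
    have /subsetP EC : E \subset comp z.
      by apply: H_bar_sub_component EHbar aE _; rewrite inE.
    have nuvE : ~~ ((u \in E) && (v \in E)).
      by apply: contra nuv => /andP[/EC uC /EC vC]; rewrite uC vC.
    have EH : E \in H by move: EHbar; rewrite mem_filter => /andP[].
    exact: connect_trans zda' (connected_one_side (connH EH) nuvE aE bE).
  by case: (connect_ind step (conj (connect0 _ z) (connect0 _ z)) za).
move=> a b aC bC; apply: connect_trans (reach b bC).
by rewrite del_edge_connect_sym; apply: reach.
Qed.

Section GammaCut.
Variables (x y : V) (Ax Ay : {set V}).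
Hypotheses (Ax_in : Ax \in A_of H B) (Ay_in : Ay \in A_of H B).
Hypotheses (xAx : x \in Ax) (yAy : y \in Ay) (neqA : Ax != Ay).

Let reached (C : {set V}) := forall z, z \in C -> connect (del_edge x y) y z.

Lemma A_of_one_side_cut C : C \in A_of H B -> one_side x y C.
Proof.
move=> CA; apply: (A_of_one_side CA); apply/negP => /andP[xC yC].
move: neqA; rewrite -(mem_A_of Ax_in xAx) -(mem_A_of Ay_in yAy).
by rewrite (mem_A_of CA xC) (mem_A_of CA yC) eqxx.
Qed.

Lemma A_of_cut_end w D : D \in A_of H B -> w \in D -> w \in [set x; y] -> D \in [:: Ax; Ay].
Proof.
move=> DA wD; rewrite -(mem_A_of DA wD) !inE => /orP[]/eqP->.
  by rewrite (mem_A_of Ax_in xAx) eqxx.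
by rewrite (mem_A_of Ay_in yAy) eqxx orbT.
Qed.

Lemma Gamma_step_reached C C' : C \in A_of H B -> C' \in A_of H B -> Gamma C C' ->
  ~~ ((C \in [:: Ax; Ay]) && (C' \in [:: Ax; Ay])) -> reached C -> reached C'.
Proof.
move=> CA C'A /andP[_ /existsP [u /existsP [v /and4P [tuv _ uC vC']]]] nC reachC z zC'.
have del_uv : del_edge x y u v.
  rewrite /del_edge /= tuv; apply: contra nC => /eqP Euv.
  rewrite (A_of_cut_end CA uC) ?(A_of_cut_end C'A vC') //.
    by rewrite -Euv set22.
  by rewrite -Euv set21.
apply: connect_trans (reachC u uC) (connect_trans (connect1 del_uv) _).
exact: A_of_one_side_cut C'A v z vC' zC'.
Qed.

Lemma Gamma_path_reached s C : C \in A_of H B -> C \notin [:: Ax; Ay] ->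
  all (mem (A_of H B)) s -> all (fun D => D \notin [:: Ax; Ay]) s ->
  path Gamma C (rcons s Ax) -> reached C -> reached Ax.
Proof.
elim: s C => [|D s IH] C CA nC /=.
  by move=> _ _ /andP[GCA _]; apply: (Gamma_step_reached CA Ax_in GCA); rewrite (negbTE nC).
case/andP=> DA sA /andP[nD sN] /andP[GCD pth] reachC.
apply: (IH D DA nD sA sN pth).
by apply: (Gamma_step_reached CA DA GCD) reachC; rewrite (negbTE nC).
Qed.

End GammaCut.

Lemma Gamma_acyclic : acyclic_on (A_of H B) Gamma.
Proof.
case=> [|A1 [|A2 [|A3 q]]] //= /and4P[A1in A2in A3in qin] /and4P[nA1 nA2 _ _] _.
apply/negP; rewrite /cycle /= => /and3P [G12 G23 pth].
case/andP: (G12) => n12 /existsP [x /existsP [y /and4P [txy _ xA1 yA2]]].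
have notA12 D : D \in A3 :: q -> D \notin [:: A1; A2].
  move=> DA3q; rewrite !inE negb_or; apply/andP; split.
    by apply: contraNneq nA1 => <-; rewrite in_cons DA3q orbT.
  by apply: contraNneq nA2 => <-.
have reachA2 : forall z, z \in A2 -> connect (del_edge x y) y z.
  by move=> z zA2; apply: (A_of_one_side_cut A1in A2in xA1 yA2 n12 A2in yA2 zA2).
have nA3 := notA12 A3 (mem_head _ _).
have nA23 : ~~ ((A2 \in [:: A1; A2]) && (A3 \in [:: A1; A2])) by rewrite (negbTE nA3) andbF.
have reachA3 := Gamma_step_reached A1in A2in xA1 yA2 n12 A2in A3in G23 nA23 reachA2.
have qN : all (fun D => D \notin [:: A1; A2]) q.
  by apply/allP => D Dq; apply: notA12; rewrite in_cons Dq orbT.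
have reachA1 := Gamma_path_reached A1in A2in xA1 yA2 n12 A3in nA3 qin qN pth reachA3.
have /negP[] := del_edge_disconnects txy.
by rewrite del_edge_connect_sym; apply: reachA1 x xA1.
Qed.

Hypotheses (connB : connected_on B t) (closedB : I_edge_closed B).

Lemma Gamma_connected : connected_on (A_of H B) Gamma.
Proof.
move=> C1 C2 /imsetP [b1 b1B ->] /imsetP [b2 b2B ->].
pose P z := connect (restrict_rel (A_of H B) Gamma) (comp b1) (comp z).
have step z z' : restrict_rel B t z z' -> P z -> P z'.
  move=> /and3P [tzz zB z'B] Pz; rewrite /P.
  have [<-|neq] := eqVneq (comp z) (comp z'); first exact: Pz.
  apply: connect_trans Pz (connect1 _).
  rewrite /restrict_rel /= !component_in_A_of // /Gamma_rel /= neq /=.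
  rewrite andbT; apply/existsP; exists z; apply/existsP; exists z'.
  by rewrite tzz !mem_component eqEsubset closedB // sub_I_H_components.
exact: (connect_ind step (connect0 _ _) (connB b1B b2B)).
Qed.

Lemma Gamma_tree : B != set0 -> is_tree_on (A_of H B) Gamma.
Proof.
move=> /set0Pn [b bB]; split; [|exact: Gamma_connected|exact: Gamma_acyclic].
by apply/set0Pn; exists (comp b); apply: component_in_A_of.
Qed.

End HostTree.

Theorem mainTheorem15 (V : finType) (H : seq {set V}) (t : rel V) (B : {set V}) :
  edges_nonempty H -> host_tree H t -> basic_set H B ->
  is_tree_on (A_of H B) (Gamma_rel H t B).
Proof.
move=> _ [[t_irr t_sym] [_ t_conn t_acyclic] connH] [compB B_gt1 _].
have [connB closedB] :=
  comp_edge_connected_I_edge_closed t_irr t_sym t_conn t_acyclic connH compB.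
apply: (Gamma_tree t_irr t_sym t_acyclic connH connB closedB).
by rewrite -card_gt0 ltnW.
Qed.
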